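(* Let $n\geq1$ and $j\geq0$ be integers. (i) If $n$ is even, then $\widehat{A}_n(q^{j},q)$ is divisible in $\mathbb{Z}[q]$ by $(1+q)^{\lfloor n/2\rfloor}$ when $j$ is even, and by $(1+q)^{\lfloor (n-1)/2\rfloor}$ when $j$ is odd. (ii) If $n$ is odd, then $\widehat{A}_n(q^{j},q)$ is divisible by $(1+q)^{\lfloor n/2\rfloor}$ for all $j\geq0$. In particular, $\widehat{A}_n(1,q)$ is divisible by $(1+q)^{\lfloor n/2\rfloor}$.
   Context: For $\pi=\pi_1\cdots\pi_n\in\mathfrak{S}_n$, $\widehat{D}(\pi)=\{2i:\pi_{2i}<\pi_{2i+1}\}\cup\{2i+1:\pi_{2i+1}>\pi_{2i+2}\}$ (indices in $\{1,\dots,n-1\}$), ${\rm altdes}(\pi)=|\widehat{D}(\pi)|$, ${\rm altmaj}(\pi)=\sum_{i\in\widehat{D}(\pi)}i$, and $\widehat{A}_n(t,q)=\sum_{\pi\in\mathfrak{S}_n}t^{{\rm altdes}(\pi)}q^{{\rm altmaj}(\pi)}$. *)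

From HB Require Import structures.
From mathcomp Require Import all_boot all_order all_algebra all_fingroup.
Set Implicit Arguments. Unset Strict Implicit. Unset Printing Implicit Defensive.
Import GRing.Theory.
Local Open Scope ring_scope.

(* One-line notation of a permutation s of {0,...,n-1}: the word
   pi_1 ... pi_n with pi_i = s (i-1) (values shifted by -1, which does
   not affect any comparison). *)
Definition pword (n : nat) (s : 'S_n) : seq nat := [seq val (s i) | i <- enum 'I_n].

(* pi_i for 1 <= i <= n (1-based positions). *)
Definition pent (n : nat) (s : 'S_n) (i : nat) : nat := nth 0%N (pword s) i.-1.

Definition altD (n : nat) (s : 'S_n) : seq nat :=
  [seq i <- iota 1 n.-1 |
     if odd i then (pent s (i.+1) < pent s i)%N else (pent s i < pent s (i.+1))%N].

Definition altdes (n : nat) (s : 'S_n) : nat := size (altD s).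
Definition altmaj (n : nat) (s : 'S_n) : nat := sumn (altD s).

Definition AhatSpec (n j : nat) : {poly int} :=
  \sum_(s : 'S_n) 'X^(j * altdes s + altmaj s).

Definition zdvdp (d p : {poly int}) : Prop := exists g : {poly int}, p = d * g.

From HB Require Import structures.
From mathcomp Require Import all_boot all_order all_algebra all_fingroup.
From mathcomp Require Import zify ring.
Import GRing.Theory.
Local Open Scope ring_scope.
Set Implicit Arguments. Unset Strict Implicit. Unset Printing Implicit Defensive.

(* Writing 2 [k in D] q^(j+k) = (1 + q^(j+k)) + e_k (q^(j+k) - 1) with e_k = +-1 and
   expanding, 2^(n-1) Ahat_n(q^j, q) becomes a sum over sets S of positions of
   prod_(k in S) (q^(j+k) - 1) prod_(k notin S) (1 + q^(j+k)) times the signed count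
   sum_pi prod_(k in S) e_k(pi).  If S has a maximal block of consecutive positions of
   odd length, reversing the corresponding factor of pi is a sign-reversing involution,
   so the signed count vanishes.  Otherwise every block of S has even length, S meets
   odd and even positions equally often, and the number of factors vanishing at q = -1
   (q^c - 1 with c even, 1 + q^c with c odd) is the required exponent.  Finally 1 + q
   is monic, so the factor 2^(n-1) can be cancelled in Z[q]. *)

Lemma expr_filter_prod (R : nzRingType) (z : R) (l : seq nat) (P : pred nat) j :
  z ^+ (j * size (filter P l) + sumn (filter P l)) =
  \prod_(x <- l) (if P x then z ^+ (j + x) else 1).
Proof.
elim: l => [|x l IH]; first by rewrite big_nil muln0 expr0.
rewrite big_cons /=; case: (P x); last by rewrite mul1r.
by rewrite /= -IH -exprD mulnS; congr (_ ^+ _); lia.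
Qed.

Definition altdesb n (s : 'S_n) (k : nat) : bool :=
  if odd k then (pent s k.+1 < pent s k)%N else (pent s k < pent s k.+1)%N.

Lemma Ahat_prod N j : AhatSpec N.+1 j =
  \sum_(s : 'S_N.+1) \prod_(k < N) (if altdesb s k.+1 then 'X^(j + k.+1) else 1).
Proof.
apply: eq_bigr => s _.
rewrite /altdes /altmaj /altD /= expr_filter_prod -(addn0 1%N) iotaDl big_map.
by rewrite -{1}(subn0 N) -/(index_iota 0 N) big_mkord.
Qed.

Lemma prod_if_expand (R : comPzRingType) N (d : 'I_N -> bool) (x : 'I_N -> R) :
  2%:R ^+ N * \prod_(i < N) (if d i then x i else 1) =
  \sum_(f : {ffun 'I_N -> bool})
    \prod_(i < N) (if f i then x i - 1 else 1 + x i) *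
    \prod_(i < N | f i) (if d i then 1 else -1).
Proof.
have two_if i : 2%:R * (if d i then x i else 1) =
    \sum_(b : bool) (if b then (if d i then 1 else -1) * (x i - 1) else 1 + x i).
  by rewrite big_bool /=; case: (d i); ring.
rewrite (_ : 2%:R ^+ N = \prod_(i < N) 2%:R); last by rewrite prodr_const card_ord.
rewrite -big_split /=; under eq_bigr do rewrite two_if.
rewrite bigA_distr_bigA /=; apply: eq_bigr => f _.
rewrite (big_mkcond (fun i => f i)) -big_split /=.
by apply: eq_bigr => i _; case: (f i); rewrite ?mulr1 // mulrC.
Qed.

Definition altsgn N (s : 'S_N.+1) (k : nat) : int := if altdesb s k.+1 then 1 else -1.

Lemma Ahat_expand N j : 2%:R ^+ N * AhatSpec N.+1 j =
  \sum_(f : {ffun 'I_N -> bool})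
    \prod_(i < N) (if f i then 'X^(j + i.+1) - 1 else 1 + 'X^(j + i.+1)) *
    (\sum_(s : 'S_N.+1) \prod_(i < N | f i) altsgn s i)%:P.
Proof.
rewrite Ahat_prod mulr_sumr.
under eq_bigr => s _ do rewrite (prod_if_expand (fun i : 'I_N => altdesb s i.+1)
                                               (fun i : 'I_N => 'X^(j + i.+1))).
rewrite exchange_big /=; apply: eq_bigr => f _.
rewrite rmorph_sum mulr_sumr; apply: eq_bigr => s _.
rewrite rmorph_prod; congr (_ * _); apply: eq_bigr => i _.
by rewrite /altsgn; case: altdesb; rewrite ?rmorphN rmorph1.
Qed.

(* [letter s p] is pi_(p+1): letter positions are 0-based, unlike those of [pent]. *)
Definition letter N (s : 'S_N.+1) (p : nat) : nat := val (s (inord p)).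

Lemma pent_letter N (s : 'S_N.+1) k : (0 < k <= N.+1)%N -> pent s k = letter s k.-1.
Proof.
move=> /andP [k_gt0 kN]; rewrite /pent /pword /letter (nth_map ord0); last first.
  by rewrite size_enum_ord; lia.
by congr (val (s _)); apply: val_inj; rewrite /= nth_enum_ord ?inordK //; lia.
Qed.

Lemma letter_inj N (s : 'S_N.+1) p p' :
  (p <= N)%N -> (p' <= N)%N -> letter s p = letter s p' -> p = p'.
Proof.
move=> pN p'N /val_inj /perm_inj /(congr1 (@nat_of_ord _)); rewrite !inordK //; lia.
Qed.

Lemma altdesb_letter N (s : 'S_N.+1) k : (k < N)%N ->
  altdesb s k.+1 = (letter s k < letter s k.+1)%N (+) odd k.+1.
Proof.
move=> kN; have neq : letter s k != letter s k.+1 by apply/eqP => /letter_inj; lia.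
rewrite /altdesb !pent_letter /=; try lia.
by case: (odd k); rewrite ?addbT ?addbF //= -leqNgt ltn_neqAle eq_sym neq.
Qed.

Section Reversal.
Variables (N a r : nat).
Hypothesis block_le : (a + r <= N)%N.

Definition rev_block (p : 'I_N.+1) : 'I_N.+1 :=
  if (a <= p <= a + r)%N then inord (a + (a + r) - p) else p.

Lemma rev_blockK : involutive rev_block.
Proof.
move=> p; rewrite {2}/rev_block; case: ifP => p_in; last by rewrite /rev_block p_in.
rewrite /rev_block inordK; last by lia.
have -> : (a <= a + (a + r) - p <= a + r)%N by lia.
by apply: val_inj; rewrite /= inordK; lia.
Qed.

Definition rev_perm : 'S_N.+1 := perm (inv_inj rev_blockK).

Lemma letter_rev_perm s p : (p <= N)%N ->
  letter (rev_perm * s)%g p = letter s (if a <= p <= a + r then a + (a + r) - p else p)%N.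
Proof.
by move=> pN; rewrite /letter permM permE /rev_block inordK //; case: ifP.
Qed.

Lemma altsgn_rev_out s k : (k < N)%N -> (k.+1 < a)%N || (a + r < k)%N ->
  altsgn (rev_perm * s)%g k = altsgn s k.
Proof.
move=> kN k_out; rewrite /altsgn !altdesb_letter // !letter_rev_perm ?(ltnW kN) //.
by have [-> ->] : (a <= k <= a + r)%N = false /\ (a <= k.+1 <= a + r)%N = false by lia.
Qed.

Hypothesis r_odd : odd r.

(* The reversal maps the pair (k, k+1) onto (k', k'+1) read backwards, and k, k'
   have the same parity because k + k' = 2a + r - 1 with r odd. *)
Lemma altsgn_rev_in s k : (a <= k < a + r)%N ->
  altsgn (rev_perm * s)%g k = - altsgn s (a + (a + r) - k.+1).
Proof.
move=> k_in; set k' := (a + (a + r) - k.+1)%N.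
have [kN k'N] : (k < N)%N /\ (k' < N)%N by lia.
rewrite /altsgn !altdesb_letter // !letter_rev_perm ?(ltnW kN) //.
have [-> ->] : (a <= k <= a + r)%N /\ (a <= k.+1 <= a + r)%N by lia.
rewrite -/k' (_ : (a + (a + r) - k = k'.+1)%N); last by lia.
have same_parity : odd k.+1 = odd k'.+1.
  have := odd_double_half r; rewrite r_odd => r_eq.
  have : (k.+1 + k'.+1 = (a + r./2).*2.+2)%N by rewrite -!addnn; lia.
  by move/(congr1 odd); rewrite oddD /= odd_double; case: (odd k); case: (odd k').
have neq : letter s k' != letter s k'.+1 by apply/eqP => /letter_inj; lia.
rewrite same_parity ltn_neqAle eq_sym neq /= leqNgt addNb.
by case: (_ (+) _); rewrite ?opprK.
Qed.

Variable F : nat -> bool.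
Hypotheses (block_in : forall k, (a <= k < a + r)%N -> F k)
  (block_left : a = 0%N \/ ~~ F a.-1) (block_right : ~~ F (a + r)).

Lemma prod_altsgn_rev s :
  \prod_(0 <= k < N | F k) altsgn (rev_perm * s)%g k = - \prod_(0 <= k < N | F k) altsgn s k.
Proof.
have a_le : (a <= N)%N by apply: leq_trans (leq_addr r a) block_le.
rewrite !(big_cat_nat (leq0n a) a_le) !(big_cat_nat (leq_addr r a) block_le) /=.
have outside m n : (n <= N)%N ->
    (forall k, (m <= k < n)%N -> F k -> (k.+1 < a)%N || (a + r < k)%N) ->
    \prod_(m <= k < n | F k) altsgn (rev_perm * s)%g k = \prod_(m <= k < n | F k) altsgn s k.
  move=> nN k_out; apply: congr_big_nat => // k /and3P [Fk mk kn].
  by apply: altsgn_rev_out; [exact: leq_trans kn nN | apply: k_out; rewrite ?mk].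
have before k : (0 <= k < a)%N -> F k -> (k.+1 < a)%N || (a + r < k)%N.
  move=> /andP [_ ka] Fk; apply/orP; left; case: block_left => [|nF]; first lia.
  case: (ltngtP k.+1 a) => // ka_eq; first lia.
  by move: nF; rewrite -ka_eq Fk.
have after k : (a + r <= k < N)%N -> F k -> (k.+1 < a)%N || (a + r < k)%N.
  move=> /andP [ark _] Fk; apply/orP; right; rewrite ltn_neqAle ark andbT.
  by apply: contraNneq block_right => ->.
rewrite (outside _ _ a_le before) (outside _ _ (leqnn N) after).
have full_block (g : nat -> int) :
    \prod_(a <= k < a + r | F k) g k = \prod_(a <= k < a + r) g k.
  by apply: congr_big_nat => // k k_in; rewrite block_in.
have block_sign : \prod_(a <= k < a + r) altsgn (rev_perm * s)%g k =
                  - \prod_(a <= k < a + r) altsgn s k.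
  rewrite (eq_big_nat _ _ (altsgn_rev_in s)); under eq_bigr do rewrite -mulN1r.
  rewrite big_split /= prodr_const_nat addKn -signr_odd r_odd expr1 [in RHS]big_nat_rev.
  by rewrite mulN1r.
by rewrite !full_block block_sign mulNr mulrN.
Qed.
End Reversal.

Lemma sum_odd N : (\sum_(0 <= k < N) odd k)%N = N./2.
Proof.
elim: N => [|N IH]; first by rewrite big_geq.
by rewrite big_nat_recr //= IH uphalf_half addnC.
Qed.

Lemma sum_even N : (\sum_(0 <= k < N) ~~ odd k)%N = N.+1./2.
Proof.
elim: N => [|N IH]; first by rewrite big_geq.
by rewrite big_nat_recr //= IH /= !uphalf_half /=; case: (odd N) => /=; lia.
Qed.

Lemma sum_odd_block a t :
  (\sum_(a <= k < a + t.*2) odd k)%N = (\sum_(a <= k < a + t.*2) ~~ odd k)%N.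
Proof.
elim: t => [|t IH]; first by rewrite addn0 !big_geq.
by rewrite doubleS !addnS !big_nat_recr //=; lia.
Qed.

Section Runs.
Local Open Scope nat_scope.
Variables (F : nat -> bool) (N : nat).
Hypothesis F_out : forall k, N <= k -> F k = false.

Definition odd_run a r : Prop :=
  [/\ odd r, a + r <= N, (forall k, a <= k < a + r -> F k),
      a = 0 \/ ~~ F a.-1 & ~~ F (a + r)].

Let count_from (p : pred nat) a := \sum_(a <= k < N) (F k && p k).

Let count_from_skip p a : ~~ F a -> count_from p a = count_from p a.+1.
Proof.
move=> Fa; rewrite /count_from; case: (ltnP a N) => aN.
  by rewrite big_ltn // (negbTE Fa).
by rewrite !big_geq // (leq_trans aN).
Qed.

Lemma run_end a : a < N -> F a -> exists2 r, a + r <= N &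
  (forall k, a <= k < a + r -> F k) /\ ~~ F (a + r).
Proof.
move=> aN Fa; have ex_end : exists r, ~~ F (a + r).
  by exists (N - a); rewrite subnKC ?F_out // ltnW.
case: (ex_minnP ex_end) => r Fr r_min; have r_gt0 : 0 < r.
  by case: r Fr {r_min} => [|//]; rewrite addn0 Fa.
have inrun k : a <= k < a + r -> F k.
  case/andP=> ak kr; apply/negPn/negP => Fk.
  by have := r_min (k - a); rewrite subnKC // => /(_ Fk); lia.
exists r => //; case: (leqP (a + r) N) => // Nar.
by have := inrun (a + r).-1; rewrite F_out; lia.
Qed.

Lemma odd_run_or_balanced :
  (exists a r, odd_run a r) \/
  \sum_(0 <= k < N) (F k && odd k) = \sum_(0 <= k < N) (F k && ~~ odd k).
Proof.
suff H d a : N - a <= d -> a = 0 \/ ~~ F a.-1 ->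
    (exists a r, odd_run a r) \/ count_from odd a = count_from (negb \o odd) a.
  by apply: (H N) => //; [rewrite subn0 | left].
elim: d a => [|d IH] a ad a_left.
  by right; rewrite /count_from !big_geq //; lia.
case: (ltnP a N) => aN; last by right; rewrite /count_from !big_geq.
case Fa: (F a).
  have [r arN [inrun Far]] := run_end aN Fa.
  case/boolP: (odd r) => r_odd; first by left; exists a, r.
  have [t r_double] : exists t, r = t.*2.
    by exists r./2; rewrite -[LHS](odd_double_half r) (negbTE r_odd).
  subst r.
  have split_at p : count_from p a = \sum_(a <= k < a + t.*2) p k + count_from p (a + t.*2).
    rewrite /count_from (@big_cat_nat _ _ _ (a + t.*2)) ?leq_addr //=.
    by congr (_ + _); apply: eq_big_nat => k k_in; rewrite inrun.
  rewrite (split_at odd) (split_at (negb \o odd)) sum_odd_block.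
  rewrite (count_from_skip odd Far) (count_from_skip _ Far).
  case: (IH (a + t.*2).+1 _ (or_intror Far)) => [|found|bal]; [lia | by left |].
  by right; rewrite bal.
have nFa : ~~ F a by rewrite Fa.
rewrite (count_from_skip odd nFa) (count_from_skip _ nFa).
by apply: IH; [lia | right].
Qed.
End Runs.

Lemma sum_xor_parity N (F : nat -> bool) (b : bool) :
  (\sum_(0 <= k < N) (F k && odd k) = \sum_(0 <= k < N) (F k && ~~ odd k))%N ->
  (\sum_(0 <= k < N) (F k (+) (b (+) odd k)))%N = if b then N.+1./2 else N./2.
Proof.
have xor_count (y : nat -> bool) :
    (\sum_(0 <= k < N) (F k (+) y k) + \sum_(0 <= k < N) (F k && y k) =
     \sum_(0 <= k < N) y k + \sum_(0 <= k < N) (F k && ~~ y k))%N.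
  by rewrite -!big_split; apply: eq_bigr => k _; case: (F k); case: (y k).
case: b => balanced /=.
  have := xor_count (fun k => ~~ odd k); rewrite sum_even.
  under [X in (_ = (_ + X)%N) -> _]eq_bigr => k _ do rewrite negbK.
  by lia.
by have := xor_count odd; rewrite sum_odd; lia.
Qed.

Definition pred_of_ord N (f : 'I_N -> bool) : pred nat :=
  fun k => if insub k is Some i then f i else false.

Lemma pred_of_ordE N (f : 'I_N -> bool) (i : 'I_N) : pred_of_ord f i = f i.
Proof. by rewrite /pred_of_ord valK. Qed.

Lemma pred_of_ord_out N (f : 'I_N -> bool) k : (N <= k)%N -> pred_of_ord f k = false.
Proof. by move=> Nk; rewrite /pred_of_ord insubF // ltnNge Nk. Qed.

Lemma big_ord_pred_of_ord (R : Type) (idx : R) (op : Monoid.law idx) N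
    (f : 'I_N -> bool) (g : nat -> R) :
  \big[op/idx]_(i < N | f i) g i = \big[op/idx]_(0 <= k < N | pred_of_ord f k) g k.
Proof. by rewrite big_mkord; apply: eq_bigl => i; rewrite pred_of_ordE. Qed.

Lemma sum_prod_altsgn_eq0 N a r (f : 'I_N -> bool) : odd_run (pred_of_ord f) N a r ->
  \sum_(s : 'S_N.+1) \prod_(i < N | f i) altsgn s i = 0.
Proof.
case=> r_odd block_le block_in block_left block_right.
set S := (X in X = 0); suff S_opp : S = - S by lia.
rewrite {1}/S (reindex_inj (mulgI (rev_perm block_le))) /= -sumrN.
apply: eq_bigr => s _; rewrite !big_ord_pred_of_ord.
exact: prod_altsgn_rev.
Qed.

Lemma dvdp_prod_root (R : idomainType) (I : Type) (r : seq I) (P : I -> {poly R})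
    (good : pred I) a :
  (forall i, good i -> root (P i) a) ->
  ('X - a%:P) ^+ (\sum_(i <- r) good i)%N %| \prod_(i <- r) P i.
Proof.
move=> goodP; elim: r => [|x r IH]; first by rewrite !big_nil expr0 dvd1p.
rewrite !big_cons; case/boolP: (good x) => gx /=; last by rewrite add0n dvdp_mull.
by rewrite add1n exprS dvdp_mul // -root_factor_theorem goodP.
Qed.

Lemma root_pm1 (R : nzRingType) c (b : bool) : b (+) odd c ->
  root ((if b then 'X^c - 1 else 1 + 'X^c) : {poly R}) (-1).
Proof.
by case: b => /= hc; apply/rootP;
  rewrite !hornerE hornerXn -signr_odd ?(negbTE hc) ?hc ?subrr ?addrN.
Qed.

Lemma dvdp_prod_balanced N j (f : 'I_N -> bool) :
  (\sum_(0 <= k < N) (pred_of_ord f k && odd k) =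
   \sum_(0 <= k < N) (pred_of_ord f k && ~~ odd k))%N ->
  (1 + 'X : {poly int}) ^+ (if odd j then N./2 else N.+1./2) %|
  \prod_(i < N) (if f i then 'X^(j + i.+1) - 1 else 1 + 'X^(j + i.+1)).
Proof.
move=> balanced; rewrite (_ : 1 + 'X = 'X - (-1)%:P); last by rewrite polyCN opprK addrC.
have roots (i : 'I_N) : f i (+) odd (j + i.+1) ->
    root (if f i then 'X^(j + i.+1) - 1 else 1 + 'X^(j + i.+1) : {poly int}) (-1).
  exact: root_pm1.
have count_roots : (\sum_(i < N) (f i (+) odd (j + i.+1)))%N =
                   (\sum_(0 <= k < N) (pred_of_ord f k (+) (~~ odd j (+) odd k)))%N.
  by rewrite big_mkord; apply: eq_bigr => i _; rewrite pred_of_ordE oddD /= addbN addNb.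
have := dvdp_prod_root (index_enum 'I_N) roots.
by rewrite count_roots sum_xor_parity //; case: odd.
Qed.

Lemma dvdp_polyC_mul_monic (R : idomainType) (d p : {poly R}) c :
  d \is monic -> c != 0 -> d %| c%:P * p -> exists q, p = d * q.
Proof.
move=> d_monic c_neq0; rewrite mul_polyC dvdpZr //.
by case/(Pdiv.IdomainMonic.dvdpP d_monic) => q ->; exists q; rewrite mulrC.
Qed.

Lemma Ahat_dvd N j :
  zdvdp ((1 + 'X) ^+ (if odd j then N./2 else N.+1./2)) (AhatSpec N.+1 j).
Proof.
set d := (1 + 'X) ^+ _.
have d_monic : d \is monic by rewrite monic_exp // addrC -polyC1 monicXaddC.
apply: (@dvdp_polyC_mul_monic _ _ _ (2 ^+ N) d_monic); first by rewrite expf_neq0.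
rewrite rmorphXn /= polyC_natr Ahat_expand.
apply: (big_ind (fun p => d %| p)) => [|p q|f _]; [exact: dvdp0 | exact: dvdp_add |].
have [[a [r run]]|balanced] := odd_run_or_balanced (pred_of_ord_out f).
  by rewrite (sum_prod_altsgn_eq0 run) mulr0 dvdp0.
exact/dvdp_mulr/dvdp_prod_balanced.
Qed.

Theorem theorem4p5 (n j : nat) : (1 <= n)%N ->
  [/\ (~~ odd n -> ~~ odd j -> zdvdp ((1 + 'X) ^+ n./2) (AhatSpec n j)),
      (~~ odd n -> odd j -> zdvdp ((1 + 'X) ^+ (n.-1)./2) (AhatSpec n j)),
      (odd n -> zdvdp ((1 + 'X) ^+ n./2) (AhatSpec n j))
    & zdvdp ((1 + 'X) ^+ n./2) (AhatSpec n 0)].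
Proof.
case: n => [//|N] _; split.
- by move=> _ /negbTE j_even; have := Ahat_dvd N j; rewrite j_even.
- by move=> _ j_odd; have := Ahat_dvd N j; rewrite j_odd.
- move=> n_odd; have N_even : odd N = false by apply/negbTE.
  by have := Ahat_dvd N j; rewrite /= uphalf_half N_even; case: odd.
- by have := Ahat_dvd N 0.
Qed.
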